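(* Let $\pi:L_{\mathcal F}\to L_{\mathcal G}$ satisfy (REG). For every $Y\in L^0(\Omega,\mathcal G,\mathbb P)$ and $\xi'\in L^*_{\mathcal F}\cap(L^1_{\mathcal F})_+$, with $\mu$ the measure $d\mu/d\mathbb P=\xi'$, the set \[\mathcal A(Y,\xi'):=\{\pi(\xi)\mid \xi\in L_{\mathcal F},\ E_{\mathbb P}[\xi'\xi\mid\mathcal G]\ge_\mu Y\}\] is downward directed; consequently there exists a sequence $(\eta_m)_{m\ge1}\subseteq L_{\mathcal F}$ with $E_{\mathbb P}[\xi'\eta_m\mid\mathcal G]\ge_\mu Y$ for all $m$ and $\pi(\eta_m)\downarrow R(Y,\xi')$ as $m\uparrow\infty$, where $R(Y,\xi'):=\inf\mathcal A(Y,\xi')$.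
   Context: Let $(\Omega,\mathcal F,\mathbb P)$ be a probability space and $\mathcal G\subseteq\mathcal F$ a sub-$\sigma$-algebra. (In)equalities hold $\mathbb P$-a.s. unless a measure is indicated ($\ge_\mu$ means $\mu$-a.e.); $\inf$ is the $\mathbb P$-essential infimum. $L_{\mathcal F}\subseteq L^0(\Omega,\mathcal F,\mathbb P)$, $L_{\mathcal G}\subseteq L^0(\Omega,\mathcal G,\mathbb P)$ are vector lattices closed under multiplication by indicators of $\mathcal F$- (resp. $\mathcal G$-) measurable sets; the order continuous dual $L^*_{\mathcal F}$ of $(L_{\mathcal F},\ge)$ is a lattice contained in $L^1_{\mathcal F}=L^1(\Omega,\mathcal F,\mathbb P)$ (functionals $X\mapsto E_{\mathbb P}[ZX]$), closed under multiplication by indicators of sets in $\mathcal F$. (REG): $\pi(X\mathbf 1_A+Y\mathbf 1_{A^c})=\pi(X)\mathbf 1_A+\pi(Y)\mathbf 1_{A^c}$ for all $X,Y\in L_{\mathcal F}$, $A\in\mathcal G$. A set of random variables is downward directed if for any two of its elements there is an element of the set below both. *)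

From HB Require Import structures.
From mathcomp Require Import all_boot all_order all_algebra.
From mathcomp Require Import all_classical all_reals all_analysis.
From mathcomp Require Import measurable_realfun.
Set Implicit Arguments. Unset Strict Implicit. Unset Printing Implicit Defensive.
Import Order.TTheory GRing.Theory Num.Theory.
Import numFieldNormedType.Exports.
Local Open Scope classical_set_scope.
Local Open Scope ring_scope.

(* Random variables are represented by functions T -> R; equalities and
   inequalities between them are taken P-a.s. (via {ae P, ...}). *)

Section Defs.
Context {d : measure_display} {T : measurableType d} {R : realType}.
Variable P : probability T R.

Definition is_subsigma (G : set (set T)) :=
  sigma_algebra setT G /\ (forall A, G A -> measurable A).

Definition Gmeasurable (G : set (set T)) (f : T -> R) :=
  forall B : set R, measurable B -> G (f @^-1` B).


(* a subset of L^0 (as a.s.-saturated set of measurable functions w.r.t. the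
   sigma-algebra M) which is a vector lattice closed under multiplication by
   indicators of sets of M *)
Definition vlattice_ind (M : set (set T)) (L : set (T -> R)) :=
  [/\ (forall X, L X -> Gmeasurable M X),
      (forall X Y, L X -> Gmeasurable M Y -> ({ae P, forall x, X x = Y x}) -> L Y),
      [/\ L (fun=> 0), (forall X Y, L X -> L Y -> L (X \+ Y)) &
          (forall (c : R) X, L X -> L (fun x => c * X x))],
      (forall X Y, L X -> L Y -> L (fun x => Num.max (X x) (Y x))) &
      (forall X A, L X -> M A -> L (fun x => indic A x * X x))].

Definition le_as (X Y : T -> R) := {ae P, forall x, X x <= Y x}.

Definition down_directed (S : set (T -> R)) :=
  forall X1 X2, S X1 -> S X2 -> exists2 X3, S X3 & le_as X3 X1 /\ le_as X3 X2.

(* order continuous dual of (LF, >=), represented (as in the paper) by the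
   densities Z in L^1 with X |-> E_P[Z X]; order continuity: for every
   downward directed D in LF with infimum 0 in LF, inf_{X in D} |E[ZX]| = 0 *)
Definition ocdual (LF : set (T -> R)) : set (T -> R) :=
  [set Z | [/\ measurable_fun setT Z,
     P.-integrable setT (EFin \o Z),
     (forall X, LF X -> P.-integrable setT (EFin \o (Z \* X))) &
     (forall D : set (T -> R), D `<=` LF -> down_directed D ->
        (forall X, D X -> le_as (fun=> 0) X) ->
        (forall W, LF W -> (forall X, D X -> le_as W X) -> le_as W (fun=> 0)) ->
        ereal_inf [set `| \int[P]_x ((Z x * X x)%:E) |%E | X in D] = 0%E)]].

Definition is_condexp (G : set (set T)) (X C : T -> R) :=
  [/\ Gmeasurable G C, P.-integrable setT (EFin \o C) &
     forall A, G A -> (\int[P]_(x in A) (C x)%:E = \int[P]_(x in A) (X x)%:E)%E].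

Definition dens_measure (xi' : T -> R) (A : set T) : \bar R :=
  (\int[P]_(x in A) (xi' x)%:E)%E.

Definition ae_wrt (mu : set T -> \bar R) (Q : T -> Prop) :=
  exists N, [/\ measurable N, mu N = 0%E & ~` [set x | Q x] `<=` N].

Definition is_essinf (S : set (T -> R)) (Z : T -> \bar R) :=
  [/\ measurable_fun setT Z,
      (forall X, S X -> {ae P, forall x, (Z x <= (X x)%:E)%E}) &
      (forall W : T -> \bar R, measurable_fun setT W ->
         (forall X, S X -> {ae P, forall x, (W x <= (X x)%:E)%E}) ->
         {ae P, forall x, (W x <= Z x)%E})].

Definition Aset (G : set (set T)) (LF : set (T -> R)) (pi : (T -> R) -> (T -> R))
  (Y xi' : T -> R) : set (T -> R) :=
  [set Z | exists xi, [/\ LF xi, Z = pi xi &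
     exists C, is_condexp G (xi' \* xi) C /\
       ae_wrt (dens_measure xi') (fun x => Y x <= C x)]].

End Defs.

(* Directedness: given admissible xi1, xi2, paste them along the G-set
   A = {pi xi1 <= pi xi2}.  Conditional expectations paste along the same set
   and mu-null sets are closed under unions, so the pasted variable is again
   admissible, and by (REG) its image under pi is min (pi xi1) (pi xi2).

   Essential infimum: compose with the bounded increasing map
   atan_shift = atan + pi/2, so that E[atan_shift X] is finite on any family S.
   By directedness a sequence of S minimizing this mean can be taken
   decreasing; its pointwise infimum lies a.s. below every X in S, since
   otherwise E[atan_shift (X \min Y_n)] would eventually drop below the
   infimum of the means. *)

From HB Require Import structures.
From mathcomp Require Import all_boot all_order all_algebra.
From mathcomp Require Import all_classical all_reals all_analysis.
From mathcomp Require Import measurable_realfun.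
From mathcomp Require Import lra.

Set Implicit Arguments.
Unset Strict Implicit.
Unset Printing Implicit Defensive.
Import Order.TTheory GRing.Theory Num.Theory.
Import numFieldNormedType.Exports.
Local Open Scope classical_set_scope.
Local Open Scope ring_scope.

Section reals.
Context {R : realType}.

Lemma invS_lt (e : R) : 0 < e -> exists k : nat, k.+1%:R^-1 < e.
Proof.
move=> e0; exists (Num.truncn e^-1).
by rewrite -[X in _ < X]invrK ltf_pV2 ?posrE ?invr_gt0 // truncnS_gt.
Qed.

Lemma le0_lt_invS (x : R) : (forall n : nat, x < n.+1%:R^-1) -> x <= 0.
Proof.
move=> h; rewrite leNgt; apply/negP => /invS_lt [k hk].
by have := lt_trans (h k) hk; rewrite ltxx.
Qed.

Definition atan_shift (t : R) : R := atan t + pi / 2.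

Lemma atan_shift_ge0 t : 0 <= atan_shift t.
Proof. by have := atan_gtNpi2 t; rewrite /atan_shift; lra. Qed.

Lemma atan_shift_le_pi t : atan_shift t <= pi.
Proof. by have := atan_ltpi2 t; rewrite /atan_shift; lra. Qed.

Lemma ler_atan_shift : {mono atan_shift : s t / s <= t}.
Proof. by apply: le_mono => s t st; rewrite /atan_shift ltrD2r lt_atan. Qed.

Lemma ltr_atan_shift : {mono atan_shift : s t / s < t}.
Proof. exact: leW_mono ler_atan_shift. Qed.

Lemma measurable_atan_shift : measurable_fun setT atan_shift.
Proof.
apply: (@measurable_funD _ _ _ _ atan (cst (pi / 2))) => //.
by apply: continuous_measurable_fun => t; exact: continuous_atan.
Qed.

Lemma seq_inf_le_of_atan_shift (y : nat -> R) (a : R) :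
  (forall k, exists n, atan_shift (y n) < atan_shift a + k.+1%:R^-1) ->
  (ereal_inf (range (fun n => (y n)%:E)) <= a%:E)%E.
Proof.
move=> hy; rewrite leNgt; apply/negP => ainf.
have inf_le n : (ereal_inf (range (fun n => (y n)%:E)) <= (y n)%:E)%E.
  by apply: ereal_inf_lbound; exists n.
move: ainf (inf_le); case: ereal_inf => [r| |] ainf le_y; last 2 first.
- by have := le_y 0%N; rewrite leye_eq.
- by move: ainf; rewrite ltNge leNye.
have [k hk] : exists k : nat, k.+1%:R^-1 < atan_shift r - atan_shift a.
  by apply: invS_lt; rewrite subr_gt0 ltr_atan_shift -lte_fin.
have [n hn] := hy k.
have : atan_shift r <= atan_shift (y n) by rewrite ler_atan_shift -lee_fin.
by move: hk hn; move: (k.+1%:R^-1) => e; lra.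
Qed.

End reals.

Section essinf.
Context {d : measure_display} {T : measurableType d} {R : realType}.
Variable P : probability T R.

Definition atan_shift_mean (X : T -> R) := (\int[P]_x (atan_shift (X x))%:E)%E.

Lemma measurable_atan_shift_comp (X : T -> R) : measurable_fun setT X ->
  measurable_fun setT (fun x => (atan_shift (X x))%:E).
Proof.
move=> mX; apply/measurable_EFinP/measurableT_comp => //.
exact: measurable_atan_shift.
Qed.

Lemma atan_shift_mean_ge0 X : (0 <= atan_shift_mean X)%E.
Proof. by apply: integral_ge0 => x _; rewrite lee_fin atan_shift_ge0. Qed.

Lemma atan_shift_mean_le_pi X :
  measurable_fun setT X -> (atan_shift_mean X <= pi%:E)%E.
Proof.
move=> mX; apply: (@le_trans _ _ (\int[P]_x (cst pi%:E x))%E).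
  apply: ge0_le_integral => //.
  - by move=> x _; rewrite lee_fin atan_shift_ge0.
  - exact: measurable_atan_shift_comp.
  - by move=> x _; rewrite lee_fin atan_shift_le_pi.
rewrite integral_cst // -[leRHS]mule1.
by rewrite lee_wpmul2l ?lee_fin ?pi_ge0 // probability_le1.
Qed.

Lemma atan_shift_mean_fin_num X :
  measurable_fun setT X -> atan_shift_mean X \is a fin_num.
Proof.
move=> mX; rewrite ge0_fin_numE ?atan_shift_mean_ge0 //.
exact: le_lt_trans (atan_shift_mean_le_pi mX) (ltry _).
Qed.

Lemma le_atan_shift_mean (X X' : T -> R) :
  measurable_fun setT X -> measurable_fun setT X' -> le_as P X X' ->
  (atan_shift_mean X <= atan_shift_mean X')%E.
Proof.
move=> mX mX' XX'; apply: ae_ge0_le_integral => //.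
- by move=> x _; rewrite lee_fin atan_shift_ge0.
- exact: measurable_atan_shift_comp.
- by move=> x _; rewrite lee_fin atan_shift_ge0.
- exact: measurable_atan_shift_comp.
- by apply: filterS XX' => x h _; rewrite lee_fin ler_atan_shift.
Qed.

Lemma atan_shift_mean_minr_gap (X Y : T -> R) (B : set T) (c : R) :
  measurable_fun setT X -> measurable_fun setT Y -> measurable B -> 0 <= c ->
  (forall x, B x -> atan_shift (X x) + c <= atan_shift (Y x)) ->
  (c%:E * P B + atan_shift_mean (X \min Y) <= atan_shift_mean Y)%E.
Proof.
move=> mX mY mB c0 gap.
have mcB : measurable_fun setT (fun x => (c * \1_B x)%:E).
  by apply/measurable_EFinP/measurable_funM => //; exact: measurable_indic.
have -> : (c%:E * P B = \int[P]_x (c * \1_B x)%:E)%E.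
  under eq_integral do rewrite EFinM.
  rewrite ge0_integralZl_EFin ?integral_indic ?setIT //.
  by apply/measurable_EFinP; exact: measurable_indic.
rewrite /atan_shift_mean -ge0_integralD //; first last.
- exact/measurable_atan_shift_comp/measurable_minr.
- by move=> x _; rewrite lee_fin atan_shift_ge0.
- by move=> x _; rewrite lee_fin mulr_ge0.
apply: ge0_le_integral => //.
- by move=> x _; rewrite adde_ge0 // lee_fin ?mulr_ge0 ?atan_shift_ge0.
- apply: emeasurable_funD => //.
  exact/measurable_atan_shift_comp/measurable_minr.
- exact: measurable_atan_shift_comp.
move=> x _; rewrite -EFinD lee_fin indicE /=.
have le_minr : atan_shift (Num.min (X x) (Y x)) <= atan_shift (X x) /\
               atan_shift (Num.min (X x) (Y x)) <= atan_shift (Y x).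
  by rewrite !ler_atan_shift ge_min lexx ge_min lexx orbT.
have [/set_mem Bx|_] := boolP (x \in B).
  by rewrite mulr1; have := gap x Bx; lra.
by rewrite mulr0 add0r; case: le_minr.
Qed.

Definition seq_inf (Y : nat -> T -> R) (x : T) : \bar R :=
  ereal_inf (range (fun n => (Y n x)%:E)).

Lemma measurable_seq_inf (Y : nat -> T -> R) :
  (forall n, measurable_fun setT (Y n)) -> measurable_fun setT (seq_inf Y).
Proof.
move=> mY; have := measurable_fun_einfs (f := fun n x => (Y n x)%:E) _ 0%N.
have -> : (fun x => einfs (fun n => (Y n x)%:E) 0%N) = seq_inf Y.
  apply/funext => x; rewrite /einfs /seq_inf; congr ereal_inf.
  by apply/seteqP; split => _ [k _ <-]; exists k.
by apply => n; apply/measurable_EFinP; exact: mY.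
Qed.

Lemma is_essinf_seq_inf (S : set (T -> R)) (Y : nat -> T -> R) :
  (forall n, S (Y n)) -> (forall n, measurable_fun setT (Y n)) ->
  (forall X, S X -> {ae P, forall x, (seq_inf Y x <= (X x)%:E)%E}) ->
  is_essinf P S (seq_inf Y).
Proof.
move=> SY mY lb; split => //; first exact: measurable_seq_inf.
move=> W _ hW; apply: filterS (ae_foralln (fun n => hW _ (SY n))) => x h.
by apply/ereal_infP => _ [n _ <-]; exact: h.
Qed.

(* The means of [X \min Y n] and [Y n] get arbitrarily close, so for each [k]
   the set where [atan_shift (Y n)] exceeds [atan_shift X] by [1/(k+1)] for
   every [n] is null. *)
Lemma seq_inf_le (X : T -> R) (Y : nat -> T -> R) (m : R) :
  measurable_fun setT X -> (forall n, measurable_fun setT (Y n)) ->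
  (forall n, m%:E <= atan_shift_mean (X \min Y n))%E ->
  (forall n, atan_shift_mean (Y n) < (m + n.+1%:R^-1)%:E)%E ->
  {ae P, forall x, (seq_inf Y x <= (X x)%:E)%E}.
Proof.
move=> mX mY m_le lt_m.
pose gap k n x := atan_shift (X x) + k.+1%:R^-1 <= atan_shift (Y n x).
pose B k := [set x | forall n, gap k n x].
have mB k : measurable (B k).
  have -> : B k = \bigcap_n [set x | gap k n x].
    by apply/seteqP; split => [x Bx n _|x Bx n]; exact: Bx.
  apply: bigcapT_measurable => n; rewrite -[X in measurable X]setTI /gap.
  have mshift := @measurable_atan_shift R.
  apply: measurable_fun_le => //; last exact: measurableT_comp (mY n).
  by apply: measurable_funD => //; exact: measurableT_comp.
have PB k : P (B k) = 0%E.
  set c : R := k.+1%:R^-1.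
  have c_gt0 : 0 < c by rewrite invr_gt0.
  have [p PBE] : exists p, P (B k) = p%:E.
    by apply/EFin_fin_numP; exact: fin_num_measure.
  have p_ge0 : 0 <= p by rewrite -lee_fin -PBE measure_ge0.
  suff : c * p <= 0 by rewrite PBE pmulr_rle0 // => p_le0; congr EFin; lra.
  apply: le0_lt_invS => n.
  have := atan_shift_mean_minr_gap mX (mY n) (mB k) (ltW c_gt0)
    (fun x Bx => Bx n).
  have [r rE] : exists r, atan_shift_mean (X \min Y n) = r%:E.
    by apply/EFin_fin_numP/atan_shift_mean_fin_num/measurable_minr.
  have [s sE] : exists s, atan_shift_mean (Y n) = s%:E.
    by apply/EFin_fin_numP/atan_shift_mean_fin_num.
  move: (m_le n) (lt_m n); rewrite PBE rE sE -EFinM -EFinD !lee_fin !lte_fin.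
  by move: (n.+1%:R^-1) (c * p) => e cp; lra.
have nullB : {ae P, forall x, forall k, ~ B k x}.
  apply: ae_foralln => k; exists (B k).
  by split; [exact: mB | exact: PB | move=> x /= /contrapT].
apply: filterS nullB => x notB; apply: seq_inf_le_of_atan_shift => k.
have /existsNP [n] := notB k; move/negP; rewrite -ltNge => lt_n.
by exists n.
Qed.

Lemma directed_minimizing_seq (S : set (T -> R)) (f : (T -> R) -> \bar R)
    (m : R) :
  down_directed P S ->
  (forall X X', S X -> S X' -> le_as P X X' -> (f X <= f X')%E) ->
  ereal_inf (f @` S) = m%:E ->
  exists Y : nat -> T -> R, [/\ forall n, S (Y n),
    forall n, le_as P (Y n.+1) (Y n) &
    forall n, (f (Y n) < (m + n.+1%:R^-1)%:E)%E].
Proof.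
move=> dirS f_mono infE.
have near_inf n : exists X, S X /\ (f X < (m + n.+1%:R^-1)%:E)%E.
  have n_gt0 : 0 < n.+1%:R^-1 :> R by rewrite invr_gt0.
  have inf_fin : ereal_inf (f @` S) \is a fin_num by rewrite infE.
  have [_ [X SX <-] fX] := lb_ereal_inf_adherent n_gt0 inf_fin.
  by exists X; rewrite EFinD -infE.
have [Xs XsP] := choice near_inf.
have SXs n : S (Xs n) := (XsP n).1.
have fXs n : (f (Xs n) < (m + n.+1%:R^-1)%:E)%E := (XsP n).2.
have meetP (XX : (T -> R) * (T -> R)) : exists W,
    S XX.1 -> S XX.2 -> [/\ S W, le_as P W XX.1 & le_as P W XX.2].
  have [[S1 S2]|nS] := pselect (S XX.1 /\ S XX.2).
    by have [W SW [W1 W2]] := dirS _ _ S1 S2; exists W.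
  by exists XX.1 => S1 S2; exfalso; exact: nS.
have [meet meetE] := choice meetP.
pose Y := fix Y n := if n is k.+1 then meet (Y k, Xs n) else Xs 0%N.
have SY n : S (Y n).
  by elim: n => [|n IH] //=; have [] := meetE (Y n, Xs n.+1) IH (SXs _).
have meetY n := meetE (Y n, Xs n.+1) (SY n) (SXs _).
exists Y; split => // -[|n] /=; first by case: (meetY 0%N).
- by case: (meetY n.+1).
- exact: fXs.
- apply: le_lt_trans (fXs n.+1); apply: f_mono (SY n.+1) (SXs _) _ => //.
  by case: (meetY n).
Qed.

Lemma essinf_decreasing_seq (S : set (T -> R)) :
  (forall X, S X -> measurable_fun setT X) -> down_directed P S -> S !=set0 ->
  exists Y : nat -> T -> R,
   [/\ forall n, S (Y n), {ae P, forall x, forall n, Y n.+1 x <= Y n x} &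
     exists Rinf, is_essinf P S Rinf /\
       {ae P, forall x, (fun n => (Y n x)%:E) @ \oo --> Rinf x}].
Proof.
move=> mS dirS [X0 SX0].
have [m infE] : exists m : R, ereal_inf (atan_shift_mean @` S) = m%:E.
  apply/EFin_fin_numP; rewrite ge0_fin_numE; last first.
    by apply: le_ereal_inf_tmp => _ [X _ <-]; exact: atan_shift_mean_ge0.
  apply: le_lt_trans (ltry pi).
  apply: le_trans (atan_shift_mean_le_pi (mS _ SX0)).
  by apply: ereal_inf_lbound; exists X0.
have [|Y [SY decY ltY]] := directed_minimizing_seq dirS _ infE.
  by move=> X X' SX SX'; apply: le_atan_shift_mean; exact: mS.
have mY n := mS _ (SY n).
exists Y; split => //; first exact: ae_foralln.
exists (seq_inf Y); split.
  apply: is_essinf_seq_inf => // X SX.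
  apply: (seq_inf_le (mS _ SX) mY _ ltY) => n.
  have [W SW [WX WY]] := dirS _ _ SX (SY n).
  rewrite -infE; apply: le_trans (le_atan_shift_mean (mS _ SW) _ _).
  - by apply: ereal_inf_lbound; exists W.
  - exact: measurable_minr (mS _ SX) (mY n).
  - by apply: filterS2 WX WY => x h1 h2; rewrite le_min h1 h2.
apply: filterS (ae_foralln decY) => x dec; apply: ereal_nonincreasing_cvgn.
by apply/nonincreasing_seqP => n; rewrite lee_fin.
Qed.

End essinf.

Section paste.
Context {T : Type} {R : realType}.
Implicit Types (A : set T) (f g h : T -> R).

(* Spelled as in (REG), so that (REG) reads as a statement about [paste]. *)
Definition paste A f g (x : T) : R := f x * \1_A x + g x * \1_(~` A) x.

Lemma pasteE A f g x : paste A f g x = if x \in A then f x else g x.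
Proof.
rewrite /paste !indicE in_setC.
by case: (x \in A); rewrite /= ?mulr1 ?mulr0 ?addr0 ?add0r.
Qed.

Lemma paste_minr f g : paste [set x | f x <= g x] f g = f \min g.
Proof.
apply/funext => x; rewrite pasteE /=.
have [fg|gf] := leP (f x) (g x); first by rewrite mem_set // min_l.
by rewrite memNset ?min_r ?ltW //= lt_geF.
Qed.

Lemma mul_paste f A g h : f \* paste A g h = paste A (f \* g) (f \* h).
Proof. by apply/funext => x; rewrite /= !pasteE; case: ifP. Qed.

Lemma EFin_paste A f g :
  EFin \o paste A f g = ((EFin \o f) \_ A \+ (EFin \o g) \_ (~` A))%E.
Proof.
apply/funext => x; rewrite /= pasteE /patch in_setC.
by case: (x \in A); rewrite /= ?adde0 ?add0e.
Qed.

End paste.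

Section measurable_paste.
Context {d : measure_display} {T : measurableType d} {R : realType}.
Implicit Types (A B : set T) (f g : T -> R).

Lemma measurable_paste A f g : measurable A ->
  measurable_fun setT f -> measurable_fun setT g ->
  measurable_fun setT (paste A f g).
Proof.
move=> mA mf mg; have mAc := measurableC mA.
by apply: measurable_funD; apply: measurable_funM => //;
  exact: measurable_indic.
Qed.

Variable P : probability T R.

Lemma integrable_patch A (F : T -> \bar R) : measurable A ->
  P.-integrable setT F -> P.-integrable setT (F \_ A).
Proof.
by move=> mA IF; apply/(integrable_mkcond _ mA); exact: integrableS _ _ _ IF.
Qed.

Lemma integrable_paste A f g : measurable A ->
  P.-integrable setT (EFin \o f) -> P.-integrable setT (EFin \o g) ->
  P.-integrable setT (EFin \o paste A f g).
Proof.
move=> mA If Ig; rewrite EFin_paste.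
by apply: integrableD => //; apply: integrable_patch => //; exact: measurableC.
Qed.

Lemma integral_paste A B f g : measurable A -> measurable B ->
  P.-integrable setT (EFin \o f) -> P.-integrable setT (EFin \o g) ->
  (\int[P]_(x in B) (paste A f g x)%:E =
   \int[P]_(x in B `&` A) (f x)%:E + \int[P]_(x in B `&` ~` A) (g x)%:E)%E.
Proof.
move=> mA mB If Ig; rewrite !integral_mkcondr -integralD //.
- apply: eq_integral => x _.
  by rewrite -[in LHS]/((EFin \o paste A f g) x) EFin_paste.
- by apply: (integrableS measurableT) => //; exact: integrable_patch.
- apply: (integrableS measurableT) => //.
  by apply: integrable_patch => //; exact: measurableC.
Qed.

End measurable_paste.

Section sub_sigma.
Context {d : measure_display} {T : measurableType d} {R : realType}.
Variable G : set (set T).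
Hypothesis sG : sigma_algebra setT G.
Local Notation GT := (g_sigma_algebraType G).

Lemma g_sigma_measurableE (A : set T) : G A <-> measurable (A : set GT).
Proof. by rewrite /measurable /= sigma_algebra_id. Qed.

Lemma GmeasurableE (f : T -> R) :
  Gmeasurable G f <-> measurable_fun setT (f : GT -> R).
Proof.
split => [h _ B mB|h B mB]; first by rewrite setTI; apply/g_sigma_measurableE/h.
by apply/g_sigma_measurableE; rewrite -[_ @^-1` _]setTI; exact: h.
Qed.

Lemma sub_sigma_ler (f g : T -> R) : Gmeasurable G f -> Gmeasurable G g ->
  G [set x | f x <= g x].
Proof.
move=> /GmeasurableE mf /GmeasurableE mg; apply/g_sigma_measurableE.
by rewrite -[X in measurable X]setTI; exact: measurable_fun_le.
Qed.

Lemma sub_sigmaC (A : set T) : G A -> G (~` A).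
Proof. by move=> /g_sigma_measurableE/measurableC/g_sigma_measurableE. Qed.

Lemma sub_sigmaI (A B : set T) : G A -> G B -> G (A `&` B).
Proof.
move=> /g_sigma_measurableE mA /g_sigma_measurableE mB.
exact/g_sigma_measurableE/measurableI.
Qed.

Lemma Gmeasurable_paste (A : set T) (f g : T -> R) : G A ->
  Gmeasurable G f -> Gmeasurable G g -> Gmeasurable G (paste A f g).
Proof.
move=> /g_sigma_measurableE mA /GmeasurableE mf /GmeasurableE mg.
by apply/GmeasurableE; exact: (@measurable_paste _ GT).
Qed.

End sub_sigma.

Section pasting.
Context {d : measure_display} {T : measurableType d} {R : realType}.
Variable P : probability T R.

Lemma vlattice_paste (M : set (set T)) (L : set (T -> R)) A X X' :
  vlattice_ind P M L -> M A -> M (~` A) -> L X -> L X' -> L (paste A X X').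
Proof.
move=> [_ _ [_ LD _] _ Lind] MA MAc LX LX'.
have -> : paste A X X' =
    (fun x => \1_A x * X x) \+ (fun x => \1_(~` A) x * X' x).
  by apply/funext => x; rewrite /paste /= mulrC [X' x * _]mulrC.
by apply: LD; exact: Lind.
Qed.

Lemma is_condexp_paste (G : set (set T)) A X1 X2 C1 C2 :
  is_subsigma G -> G A ->
  P.-integrable setT (EFin \o X1) -> P.-integrable setT (EFin \o X2) ->
  is_condexp P G X1 C1 -> is_condexp P G X2 C2 ->
  is_condexp P G (paste A X1 X2) (paste A C1 C2).
Proof.
move=> [sG GF] GA IX1 IX2 [mC1 IC1 eC1] [mC2 IC2 eC2]; split.
- exact: Gmeasurable_paste.
- exact: integrable_paste (GF _ GA) IC1 IC2.
move=> B GB; have [mA mB] := (GF _ GA, GF _ GB).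
rewrite !integral_paste // eC1 ?eC2 //; apply: sub_sigmaI => //.
exact: sub_sigmaC.
Qed.

Lemma dens_measure_setU_null (xi' : T -> R) (N1 N2 : set T) :
  measurable_fun setT xi' -> {ae P, forall x, 0 <= xi' x} ->
  measurable N1 -> measurable N2 ->
  dens_measure P xi' N1 = 0%E -> dens_measure P xi' N2 = 0%E ->
  dens_measure P xi' (N1 `|` N2) = 0%E.
Proof.
move=> mxi xi0 mN1 mN2.
pose xp := xi' \max cst 0.
have mxp : measurable_fun setT xp by exact: measurable_maxr.
have xp0 x : (0 <= (xp x)%:E)%E by rewrite lee_fin le_max lexx orbT.
have dens_xp E : measurable E ->
    dens_measure P xi' E = (\int[P]_(x in E) (xp x)%:E)%E.
  move=> mE; apply: ae_eq_integral => //.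
  - by apply/measurable_EFinP; exact: measurable_funS mxi.
  - by apply/measurable_EFinP; exact: measurable_funS mxp.
  - by apply: filterS xi0 => x xi0x _; rewrite /xp /= max_l.
have mN12 : measurable (N1 `|` N2) by exact: measurableU.
rewrite !dens_xp // => N1_0 N2_0.
apply/eqP; rewrite eq_le integral_ge0 // andbT.
have mD : measurable ((N1 `|` N2) `\` N1) by exact: measurableD.
rewrite -(setDUK (@subsetUl _ N1 N2)) ge0_integral_setU //; last 2 first.
- by rewrite setDUK //; apply/measurable_EFinP; exact: measurable_funS mxp.
- by apply/disj_setPS => x [? []].
rewrite N1_0 add0e -N2_0; apply: ge0_subset_integral => //.
- by apply/measurable_EFinP; exact: measurable_funS mxp.
- by move=> x [[]].
Qed.

Lemma ae_wrtS (mu : set T -> \bar R) (Q Q' : T -> Prop) :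
  (forall x, Q x -> Q' x) -> ae_wrt mu Q -> ae_wrt mu Q'.
Proof.
move=> QQ' [N [mN N0 sN]]; exists N; split => // x /= nQ'.
by apply: sN => Qx; exact/nQ'/QQ'.
Qed.

Lemma ae_wrt_dens_and (xi' : T -> R) (Q1 Q2 : T -> Prop) :
  measurable_fun setT xi' -> {ae P, forall x, 0 <= xi' x} ->
  ae_wrt (dens_measure P xi') Q1 -> ae_wrt (dens_measure P xi') Q2 ->
  ae_wrt (dens_measure P xi') (fun x => Q1 x /\ Q2 x).
Proof.
move=> mxi xi0 [N1 [mN1 N1_0 sN1]] [N2 [mN2 N2_0 sN2]].
exists (N1 `|` N2); split; first exact: measurableU.
  exact: dens_measure_setU_null.
by move=> x /= /not_andP [/sN1|/sN2]; [left|right].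
Qed.

End pasting.

Section Aset.
Context {d : measure_display} {T : measurableType d} {R : realType}.
Context {P : probability T R} {G : set (set T)} {LF LG : set (T -> R)}.
Context {rho : (T -> R) -> (T -> R)} {Y xi' : T -> R}.
Hypothesis subG : is_subsigma G.
Hypothesis LG_lattice : vlattice_ind P G LG.
Hypothesis rhoLG : forall X, LF X -> LG (rho X).

Lemma Gmeasurable_rho xi : LF xi -> Gmeasurable G (rho xi).
Proof. by move=> LFxi; case: LG_lattice => + _ _ _ _; apply; exact: rhoLG. Qed.

Lemma Aset_measurable X : Aset P G LF rho Y xi' X -> measurable_fun setT X.
Proof.
move=> [xi [LFxi -> _]] _ B mB; rewrite setTI; apply: subG.2.
exact: Gmeasurable_rho.
Qed.

Hypothesis LF_lattice : vlattice_ind P measurable LF.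
Hypothesis REG : forall X X' A, LF X -> LF X' -> G A ->
  {ae P, forall x, rho (fun w => X w * indic A w + X' w * indic (~` A) w) x
                   = rho X x * indic A x + rho X' x * indic (~` A) x}.
Hypothesis xi'_dual : ocdual P LF xi'.
Hypothesis xi'_ge0 : {ae P, forall x, 0 <= xi' x}.

Lemma Aset_down_directed : down_directed P (Aset P G LF rho Y xi').
Proof.
have [mxi _ Ixi _] := xi'_dual.
move=> _ _ [xi1 [LF1 -> [C1 [cond1 ae1]]]] [xi2 [LF2 -> [C2 [cond2 ae2]]]].
set A := [set x | rho xi1 x <= rho xi2 x].
have GA : G A :=
  sub_sigma_ler subG.1 (Gmeasurable_rho LF1) (Gmeasurable_rho LF2).
have mA := subG.2 _ GA.
exists (rho (paste A xi1 xi2)).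
  exists (paste A xi1 xi2); split => //.
    exact: vlattice_paste LF_lattice mA (measurableC mA) LF1 LF2.
  exists (paste A C1 C2); split.
    by rewrite mul_paste; apply: is_condexp_paste => //; exact: Ixi.
  apply: ae_wrtS (ae_wrt_dens_and mxi xi'_ge0 ae1 ae2) => x [YC1 YC2].
  by rewrite pasteE; case: ifP.
have rho_min : {ae P, forall x,
    rho (paste A xi1 xi2) x = Num.min (rho xi1 x) (rho xi2 x)}.
  apply: filterS (REG LF1 LF2 GA) => x ->.
  by rewrite -/(paste A _ _ x) paste_minr.
by split; apply: filterS rho_min => x ->; rewrite ge_min lexx ?orbT.
Qed.

End Aset.

Theorem lemma17 (d : measure_display) (T : measurableType d) (R : realType)
  (P : probability T R) (G : set (set T))
  (LF LG : set (T -> R)) (pi : (T -> R) -> (T -> R))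
  (Y xi' : T -> R) :
  is_subsigma G ->
  vlattice_ind P measurable LF ->
  vlattice_ind P G LG ->
  (* standing assumptions on the order continuous dual *)
  (forall Z1 Z2, ocdual P LF Z1 -> ocdual P LF Z2 ->
     ocdual P LF (fun x => Num.max (Z1 x) (Z2 x)) /\
     ocdual P LF (fun x => Num.min (Z1 x) (Z2 x))) ->
  (forall Z A, ocdual P LF Z -> measurable A ->
     ocdual P LF (fun x => indic A x * Z x)) ->
  (* pi : L_F -> L_G, well defined on a.s.-classes *)
  (forall X, LF X -> LG (pi X)) ->
  (forall X X', LF X -> LF X' -> {ae P, forall x, X x = X' x} ->
     {ae P, forall x, pi X x = pi X' x}) ->
  (* (REG) *)
  (forall X X' A, LF X -> LF X' -> G A ->
     {ae P, forall x, pi (fun w => X w * indic A w + X' w * indic (~` A) w) x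
                      = pi X x * indic A x + pi X' x * indic (~` A) x}) ->
  (* Y in L^0(G), xi' in L^*_F with xi' >= 0 *)
  Gmeasurable G Y ->
  ocdual P LF xi' ->
  {ae P, forall x, 0 <= xi' x} ->
  down_directed P (Aset P G LF pi Y xi') /\
  (Aset P G LF pi Y xi' !=set0 ->
   exists eta : nat -> T -> R,
     [/\ (forall m, LF (eta m) /\
           exists C, is_condexp P G (xi' \* eta m) C /\
             ae_wrt (dens_measure P xi') (fun x => Y x <= C x)),
         {ae P, forall x, forall m, pi (eta m.+1) x <= pi (eta m) x} &
         exists Rinf : T -> \bar R,
           is_essinf P (Aset P G LF pi Y xi') Rinf /\
           {ae P, forall x, (fun m => (pi (eta m) x)%:E) @ \oo --> Rinf x}]).
Proof.
move=> subG LF_lattice LG_lattice _ _ piLG _ REG _ xi'_dual xi'_ge0.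
have dirA : down_directed P (Aset P G LF pi Y xi') :=
  Aset_down_directed subG LG_lattice piLG LF_lattice REG xi'_dual xi'_ge0.
split=> // Ane.
have [Yn [AYn decY essY]] :=
  essinf_decreasing_seq (Aset_measurable subG LG_lattice piLG) dirA Ane.
have [eta etaP] := choice AYn.
have Yn_eta : Yn = fun m => pi (eta m) by apply/funext => m; case: (etaP m).
subst Yn.
by exists eta; split => // m; case: (etaP m).
Qed.
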